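(* Let $W$ be an entanglement witness on $\mathbb{C}^m\otimes\mathbb{C}^n$ and set $W_t:=tW+(1-t)W^*$ for $t\in[0,1]$. (i) For every $t\in[0,1]$, $W_t$ is an entanglement witness if and only if $W_t$ is not positive semidefinite. (ii) For a given $t\in[0,1]$, $W_t$ is an entanglement witness if and only if there is a state $\rho$ such that $W$ detects $\rho_t:=t\rho+(1-t)\rho^*$, i.e. $\mathrm{tr}(W\rho_t)<0$.
   Context: An entanglement witness on $\mathbb{C}^m\otimes\mathbb{C}^n$ is a Hermitian matrix $W$ with $\mathrm{tr}(W\sigma)\ge0$ for all separable states $\sigma$ and $\mathrm{tr}(W\sigma)<0$ for at least one entangled state; $W$ detects $\rho$ if $\mathrm{tr}(W\rho)<0$. $M^*$ denotes the entrywise complex conjugate. *)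

From HB Require Import structures.
From mathcomp Require Import all_boot all_order all_algebra.
From mathcomp Require Import complex mxtens.
From mathcomp Require Import reals.
Set Implicit Arguments. Unset Strict Implicit. Unset Printing Implicit Defensive.
Import Order.TTheory GRing.Theory Num.Theory.
Local Open Scope ring_scope.
Local Open Scope complex_scope.

Section QI.
Variable R : realType.
Local Notation C := R[i].

Definition mconj {p q : nat} (A : 'M[C]_(p, q)) : 'M[C]_(p, q) := map_mx (@conjc R) A.

Definition adj {p q : nat} (A : 'M[C]_(p, q)) : 'M[C]_(q, p) := (mconj A)^T.

Definition hermitian {p : nat} (A : 'M[C]_p) : Prop := adj A = A.

(* positive semidefinite: Hermitian with nonnegative quadratic form
   (0 <= z in the numClosedField C means z is real and nonnegative) *)
Definition psd {p : nat} (A : 'M[C]_p) : Prop :=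
  hermitian A /\ forall v : 'cV[C]_p, 0 <= (adj v *m A *m v) 0 0.

Definition is_state {p : nat} (rho : 'M[C]_p) : Prop := psd rho /\ \tr rho = 1.

Definition separable {m n : nat} (sigma : 'M[C]_(m * n)) : Prop :=
  exists (k : nat) (pr : 'I_k -> R) (A : 'I_k -> 'M[C]_m) (B : 'I_k -> 'M[C]_n),
    [/\ (forall j, 0 <= pr j), \sum_(j < k) pr j = 1,
        (forall j, is_state (A j) /\ is_state (B j)) &
        sigma = \sum_(j < k) (pr j)%:C *: (A j *t B j)].

Definition detects {p : nat} (W rho : 'M[C]_p) : Prop := \tr (W *m rho) < 0.

Definition entanglement_witness {m n : nat} (W : 'M[C]_(m * n)) : Prop :=
  [/\ hermitian W,
      (forall sigma : 'M[C]_(m * n), separable sigma -> 0 <= \tr (W *m sigma)) &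
      exists rho : 'M[C]_(m * n), [/\ is_state rho, ~ separable rho & detects W rho]].

Definition cmix {p : nat} (t : R) (M : 'M[C]_p) : 'M[C]_p :=
  t%:C *: M + (1 - t)%:C *: mconj M.

End QI.

From HB Require Import structures.
From mathcomp Require Import all_boot all_order all_algebra.
From mathcomp Require Import complex mxtens.
From mathcomp Require Import reals.
From mathcomp Require spectral.
From Stdlib Require Import Classical.
(* Imported last, so that [hermitian] is Defs.hermitian and not the notation
   from sesquilinear. *)
From Pilot Require Import Defs.
Import Order.TTheory GRing.Theory Num.Theory.
Set Implicit Arguments. Unset Strict Implicit. Unset Printing Implicit Defensive.
Local Open Scope ring_scope.

(* Entrywise conjugation M |-> M^c maps separable states to separable states,
   and tr(W^c s) is the complex conjugate of tr(W s^c); hence every W_t is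
   nonnegative on separable states, and W_t is a witness iff it detects some
   state.  A positive semidefinite matrix detects no state, while a Hermitian
   X with v^H X v < 0 detects the pure state v v^H / |v|^2; this gives (i).
   For Hermitian W and rho, tr(W_t rho) = tr(W rho_t), which gives (ii). *)

Section ConjugateMixture.
Variable R : realType.
Local Notation C := R[i].

Lemma mconjK p q (A : 'M[C]_(p, q)) : mconj (mconj A) = A.
Proof. by apply/matrixP => i j; rewrite !mxE conjcK. Qed.

Lemma mconjM p q r (A : 'M[C]_(p, q)) (B : 'M[C]_(q, r)) :
  mconj (A *m B) = mconj A *m mconj B.
Proof. exact: map_mxM. Qed.

Lemma mconjT p q (A : 'M[C]_(p, q)) : mconj A^T = (mconj A)^T.
Proof. by rewrite /mconj map_trmx. Qed.

Lemma adjK p q (A : 'M[C]_(p, q)) : adj (adj A) = A.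
Proof. by apply/matrixP => i j; rewrite !mxE conjcK. Qed.

Lemma adjM p q r (A : 'M[C]_(p, q)) (B : 'M[C]_(q, r)) :
  adj (A *m B) = adj B *m adj A.
Proof. by rewrite /adj /mconj map_mxM trmx_mul. Qed.

Lemma adjD p q (A B : 'M[C]_(p, q)) : adj (A + B) = adj A + adj B.
Proof. by rewrite /adj /mconj map_mxD linearD. Qed.

Lemma adjZ p q a (A : 'M[C]_(p, q)) : adj (a *: A) = conjc a *: adj A.
Proof. by rewrite /adj /mconj map_mxZ linearZ. Qed.

Lemma hermitian_mconjE p (A : 'M[C]_p) : hermitian A -> mconj A = A^T.
Proof. by move=> hA; rewrite -[in RHS]hA /adj trmxK. Qed.

Lemma hermitian_mconj p (A : 'M[C]_p) : hermitian A -> hermitian (mconj A).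
Proof. by move=> hA; rewrite /hermitian /adj mconjK (hermitian_mconjE hA). Qed.

Lemma hermitian_cmix p t (W : 'M[C]_p) : hermitian W -> hermitian (cmix t W).
Proof.
move=> hW; rewrite /hermitian /cmix adjD !adjZ !conjc_real hW.
by rewrite (hermitian_mconj hW).
Qed.

Lemma mxtrace_mconj_mul p (W rho : 'M[C]_p) : hermitian W -> hermitian rho ->
  \tr (mconj W *m rho) = \tr (W *m mconj rho).
Proof.
move=> hW hr; rewrite (hermitian_mconjE hW) (hermitian_mconjE hr).
by rewrite -mxtrace_tr trmx_mul trmxK mxtrace_mulC.
Qed.

Lemma mxtrace_cmix p t (W rho : 'M[C]_p) : hermitian W -> hermitian rho ->
  \tr (cmix t W *m rho) = \tr (W *m cmix t rho).
Proof.
move=> hW hr; rewrite /cmix mulmxDl mulmxDr -!scalemxAl -!scalemxAr.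
by rewrite !mxtraceD !mxtraceZ mxtrace_mconj_mul.
Qed.

Lemma is_state_mconj p (A : 'M[C]_p) : is_state A -> is_state (mconj A).
Proof.
move=> [[hA qA] trA]; split; [split|].
- exact: hermitian_mconj.
- move=> v; have -> : adj v *m mconj A *m v = mconj (adj (mconj v) *m A *m mconj v).
    by rewrite /adj !mconjM -mconjT mconjK.
  by rewrite mxE conjC_ge0; exact: qA.
- by rewrite /mconj trace_map_mx trA rmorph1.
Qed.

Lemma separable_mconj m n (s : 'M[C]_(m * n)) : separable s -> separable (mconj s).
Proof.
move=> [k [pr [A [B [pr_ge0 pr_sum1 AB_states ->]]]]].
exists k, pr, (fun j => mconj (A j)), (fun j => mconj (B j)); split => //.
  by move=> j; have [? ?] := AB_states j; split; apply: is_state_mconj.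
rewrite /mconj raddf_sum; apply: eq_bigr => j _.
rewrite /= map_mxZ map_mxT; congr (_ *: _); exact: conjc_real.
Qed.

Lemma cmix_separable_ge0 m n t (W : 'M[C]_(m * n)) : 0 <= t <= 1 ->
  (forall s, separable s -> 0 <= \tr (W *m s)) ->
  forall s, separable s -> 0 <= \tr (cmix t W *m s).
Proof.
move=> /andP[t_ge0 t_le1] W_sep_ge0 s sep_s.
have trJ : \tr (mconj W *m s) = (\tr (W *m mconj s))^*.
  by rewrite -[s in LHS]mconjK -mconjM /mconj trace_map_mx.
rewrite /cmix mulmxDl -!scalemxAl mxtraceD !mxtraceZ trJ.
apply: addr_ge0; apply: mulr_ge0; rewrite ?ler0c ?subr_ge0 ?conjC_ge0 //.
  exact: W_sep_ge0.
exact/W_sep_ge0/separable_mconj.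
Qed.

Lemma quad_conj_diag_ge0 k p (X : 'M[C]_p) (Q : 'M[C]_(k, p)) i :
  (forall v : 'cV[C]_p, 0 <= (adj v *m X *m v) 0 0) -> 0 <= (Q *m X *m adj Q) i i.
Proof.
move=> X_ge0; have := X_ge0 (adj (row i Q)); rewrite adjK.
congr (0 <= _); rewrite mxE [RHS]mxE; apply: eq_bigr => j _.
by rewrite -row_mul !mxE.
Qed.

Lemma psd_mxtrace_mul_ge0 p (A B : 'M[C]_p) : psd A -> psd B -> 0 <= \tr (A *m B).
Proof.
move=> [_ A_ge0] [hB B_ge0].
have adjE (M : 'M[C]_p) : map_mx Num.conj M^T = adj M.
  by apply/matrixP => i j; rewrite !mxE.
have /spectral.orthomx_spectralP B_diag : B \is spectral.normalmx.
  by apply/spectral.normalmxP; rewrite adjE hB.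
set P := spectral.spectralmx B in B_diag; set d := spectral.spectral_diag B in B_diag.
have P_unitary := spectral.spectral_unitarymx B.
rewrite spectral.invmx_unitary // adjE in B_diag.
have PPadj : P *m adj P = 1%:M by rewrite -adjE; apply/spectral.unitarymxP.
have d_ge0 i : 0 <= d 0 i.
  have := quad_conj_diag_ge0 P i B_ge0.
  by rewrite B_diag !mulmxA PPadj mul1mx -mulmxA PPadj mulmx1 mxE eqxx mulr1n.
rewrite B_diag !mulmxA mxtrace_mulC !mulmxA mul_mx_diag /mxtrace.
by apply: sumr_ge0 => i _; rewrite mxE mulr_ge0 ?quad_conj_diag_ge0.
Qed.

Lemma adj_mul_self_gt0 p (v : 'cV[C]_p) : v != 0 -> 0 < (adj v *m v) 0 0.
Proof.
move=> v_neq0; have term_ge0 k : 0 <= adj v 0 k * v k 0.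
  by rewrite !mxE mulrC mulcJ_ge0.
rewrite lt_def mxE sumr_ge0 ?andbT //; apply: contra v_neq0 => /eqP sum0.
apply/eqP/matrixP => k j; rewrite ord1 mxE.
have /eqP := psumr_eq0P (fun k _ => term_ge0 k) sum0 (i := k) isT.
by rewrite !mxE mulf_eq0 conjc_eq0 orbb => /eqP.
Qed.

Definition pure_state p (v : 'cV[C]_p) : 'M[C]_p :=
  ((adj v *m v) 0 0)^-1 *: (v *m adj v).

Lemma mxtrace_mul_pure_state p (X : 'M[C]_p) (v : 'cV[C]_p) :
  \tr (X *m pure_state v) = ((adj v *m v) 0 0)^-1 * (adj v *m X *m v) 0 0.
Proof.
by rewrite -scalemxAr mxtraceZ mulmxA mxtrace_mulC mulmxA /mxtrace big_ord1.
Qed.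

Lemma is_state_pure_state p (v : 'cV[C]_p) : v != 0 -> is_state (pure_state v).
Proof.
move=> /adj_mul_self_gt0 c_gt0; set c := (adj v *m v) 0 0 in c_gt0 *.
have cJ : conjc c = c by apply/CrealP; exact: gtr0_real.
split; [split|].
- rewrite /hermitian /pure_state adjZ adjM adjK fmorphV.
  by congr (_^-1 *: _); exact: cJ.
- move=> u; rewrite -scalemxAr -scalemxAl mxE.
  have -> : adj u *m (v *m adj v) *m u = (adj u *m v) *m adj (adj u *m v).
    by rewrite adjM adjK !mulmxA.
  rewrite [X in _ * X]mxE big_ord1 [adj _ 0 0]mxE.
  by rewrite [mconj _ 0 0]mxE mulr_ge0 ?mulcJ_ge0 // invr_ge0 ltW.
- by rewrite mxtraceZ mxtrace_mulC /mxtrace big_ord1 mulVf ?gt_eqF.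
Qed.

Lemma quad_lt0_detects_state p (X : 'M[C]_p) (v : 'cV[C]_p) :
  (adj v *m X *m v) 0 0 < 0 -> exists rho, is_state rho /\ detects X rho.
Proof.
move=> quad_lt0; have v_neq0 : v != 0.
  by apply: contraTneq quad_lt0 => ->; rewrite mulmx0 mxE ltxx.
exists (pure_state v); split; first exact: is_state_pure_state.
by rewrite /detects mxtrace_mul_pure_state pmulr_rlt0 ?invr_gt0 ?adj_mul_self_gt0.
Qed.

Lemma hermitian_quad_real p (X : 'M[C]_p) (v : 'cV[C]_p) :
  hermitian X -> (adj v *m X *m v) 0 0 \is Num.real.
Proof.
move=> hX; apply/CrealP.
have quad_adj : adj (adj v *m X *m v) = adj v *m X *m v.
  by rewrite !adjM adjK hX mulmxA.
by rewrite -[in RHS]quad_adj !mxE.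
Qed.

Lemma not_psd_detects_state p (X : 'M[C]_p) :
  hermitian X -> ~ psd X -> exists rho, is_state rho /\ detects X rho.
Proof.
move=> hX X_not_psd.
have [v quad_not_ge0] : exists v : 'cV[C]_p, ~ (0 <= (adj v *m X *m v) 0 0).
  by apply: not_all_ex_not => X_ge0; apply: X_not_psd.
apply: (@quad_lt0_detects_state _ _ v).
by rewrite real_ltNge ?hermitian_quad_real //; apply/negP.
Qed.

Lemma psd_detectsN p (X rho : 'M[C]_p) : psd X -> is_state rho -> ~ detects X rho.
Proof. by move=> X_psd [rho_psd _]; rewrite /detects le_gtF ?psd_mxtrace_mul_ge0. Qed.

Lemma entanglement_witnessE m n (X : 'M[C]_(m * n)) : hermitian X ->
  (forall s, separable s -> 0 <= \tr (X *m s)) ->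
  entanglement_witness X <-> exists rho, is_state rho /\ detects X rho.
Proof.
move=> hX X_sep_ge0; split; first by case=> _ _ [rho [rho_state _ X_rho]]; exists rho.
case=> rho [rho_state X_rho]; split => //; exists rho; split => // rho_sep.
by move: X_rho; rewrite /detects le_gtF ?X_sep_ge0.
Qed.

End ConjugateMixture.

Theorem lemma4 (R : realType) (m n : nat) (W : 'M[R[i]]_(m * n)) :
  entanglement_witness W ->
  (forall t : R, 0 <= t <= 1 ->
     (entanglement_witness (cmix t W) <-> ~ psd (cmix t W))) /\
  (forall t : R, 0 <= t <= 1 ->
     (entanglement_witness (cmix t W) <->
      exists rho : 'M[R[i]]_(m * n), is_state rho /\ detects W (cmix t rho))).
Proof.
move=> [hW W_sep_ge0 _]; split=> t t01; have hWt := hermitian_cmix t hW;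
  rewrite (entanglement_witnessE hWt (cmix_separable_ge0 t01 W_sep_ge0)).
- split; last exact: not_psd_detects_state.
  by move=> [rho [rho_state Wt_rho]] /psd_detectsN/(_ rho_state).
- have trE rho : is_state rho -> \tr (cmix t W *m rho) = \tr (W *m cmix t rho).
    by move=> [[hrho _] _]; exact: mxtrace_cmix.
  by split=> -[rho [rho_state det]]; exists rho; rewrite /detects trE in det *.
Qed.
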